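(* Let $(R,\mathfrak{m})$ be a Noetherian local ring, $I$ an ideal of $R$ and $N$ an integer with $N>\mathrm{AR}(\mathfrak{m},I\subseteq R)$. Let $J$ be an ideal of $R$ such that $I+\mathfrak{m}^N=J+\mathfrak{m}^N$ and such that $R/I$ and $R/J$ have the same Hilbert function. Then $\mu(I)=\mu(J)$. Moreover, there exist a minimal set of generators $\{f_1,\ldots,f_m\}$ of $I$ and elements $\epsilon_1,\ldots,\epsilon_m\in\mathfrak{m}^N$ such that $J=(f_1+\epsilon_1,\ldots,f_m+\epsilon_m)$.
   Context: $\mu(-)$ denotes the minimal number of generators. $\mathrm{AR}(\mathfrak{m},I\subseteq R)$ is the least integer $s$ with $\mathfrak{m}^n\cap I=\mathfrak{m}^{n-s}(\mathfrak{m}^s\cap I)$ for all $n\ge s$. The Hilbert function of $R/I$ is $n\mapsto\dim_k \mathfrak{m}^n(R/I)/\mathfrak{m}^{n+1}(R/I)$ with $k=R/\mathfrak{m}$. *)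

From mathcomp Require Import all_boot all_order all_algebra.
Set Implicit Arguments. Unset Strict Implicit. Unset Printing Implicit Defensive.
Import GRing.Theory.
Local Open Scope ring_scope.

Section IdealDefs.
Variable R : comUnitRingType.

Definition ideq (I J : R -> Prop) : Prop := forall x, I x <-> J x.

Definition is_ideal (I : R -> Prop) : Prop :=
  [/\ I 0, (forall a b, I a -> I b -> I (a + b)) & (forall r a, I a -> I (r * a))].

Definition gen_fam (n : nat) (f : 'I_n -> R) : R -> Prop :=
  fun x => exists c : 'I_n -> R, x = \sum_(i < n) c i * f i.

Definition span (S : R -> Prop) : R -> Prop :=
  fun x => exists n (a s : 'I_n -> R),
    (forall i, S (s i)) /\ x = \sum_(i < n) a i * s i.

Definition idsum (I J : R -> Prop) : R -> Prop :=
  fun x => exists a b, I a /\ J b /\ x = a + b.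

Definition idcap (I J : R -> Prop) : R -> Prop := fun x => I x /\ J x.

Definition idmul (I J : R -> Prop) : R -> Prop :=
  span (fun x => exists a b, I a /\ J b /\ x = a * b).

Fixpoint idpow (I : R -> Prop) (n : nat) : R -> Prop :=
  match n with
  | 0 => fun _ => True
  | n'.+1 => idmul (idpow I n') I
  end.

Definition noetherian : Prop :=
  forall I, is_ideal I -> exists n (f : 'I_n -> R), ideq I (gen_fam f).

(* (R, m) is local with maximal ideal m: m is an ideal consisting exactly of
   the non-units (R is nontrivial, being a unit ring). *)
Definition local_max (m : R -> Prop) : Prop :=
  is_ideal m /\ forall x, m x <-> x \notin GRing.unit.

Definition min_num_gens (I : R -> Prop) (k : nat) : Prop :=
  (exists f : 'I_k -> R, ideq I (gen_fam f)) /\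
  forall l (g : 'I_l -> R), ideq I (gen_fam g) -> (k <= l)%N.

Definition AR_prop (m I : R -> Prop) (s : nat) : Prop :=
  forall n, (s <= n)%N ->
    ideq (idcap (idpow m n) I) (idmul (idpow m (n - s)) (idcap (idpow m s) I)).

Definition AR_number (m I : R -> Prop) (s : nat) : Prop :=
  AR_prop m I s /\ forall t, AR_prop m I t -> (s <= t)%N.

(* Hilbert function of R/I at n equals d:
   m^n(R/I)/m^(n+1)(R/I) = (m^n + I)/(m^(n+1) + I) has dimension d over
   k = R/m, i.e. it has a k-basis of d elements: classes of x_0..x_(d-1)
   in M = m^n + I which span M modulo N = m^(n+1) + I and are linearly
   independent over R/m (scalars of k lifted to R). *)
Definition hilbert_fun (m I : R -> Prop) (n d : nat) : Prop :=
  let M := idsum (idpow m n) I in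
  let N := idsum (idpow m n.+1) I in
  exists x : 'I_d -> R,
    [/\ (forall i, M (x i)),
        (forall y, M y -> exists c : 'I_d -> R, N (y - \sum_(i < d) c i * x i))
      & (forall c : 'I_d -> R, N (\sum_(i < d) c i * x i) -> forall i, m (c i))].

End IdealDefs.

(* Take minimal generators f_i of I and, as I + m^N = J + m^N, elements eps_i
   of m^N with g_i = f_i + eps_i in J. By Artin-Rees (N > AR(m, I)) every
   element of I ∩ m^n lies in (g) + m^(n+1); the equality of the Hilbert
   functions, a dimension count over R/m, turns this into J ∩ m^n ⊆ I + m^(n+1).
   Induction on n gives J ⊆ (g) + m^n for all n, hence J = (g) by Krull's
   intersection theorem. A relation among the g_i modulo mJ yields one among
   the f_i modulo m^N ∩ I ⊆ mI, which the minimality of the f_i (Nakayama)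
   forbids; so the g_i form a minimal system of generators of J. *)

From Pilot Require Import Defs.
From mathcomp Require Import all_boot all_order all_algebra ring zify.
From Stdlib Require Import Classical ClassicalEpsilon Wf_nat.
Set Implicit Arguments. Unset Strict Implicit. Unset Printing Implicit Defensive.
Import GRing.Theory.
Local Open Scope ring_scope.
Local Notation span := Defs.span.

Lemma ex_minimal (P : nat -> Prop) n : P n ->
  exists k, P k /\ forall l, P l -> (k <= l)%N.
Proof.
move=> Pn; have [k [[Pk k_min] _]] := dec_inh_nat_subset_has_unique_least_element
  P (fun n => classic (P n)) (ex_intro _ n Pn).
by exists k; split=> // l /k_min /leP.
Qed.

Section Ideals.
Variable R : comUnitRingType.
Implicit Types (I J K L S : R -> Prop) (x y a b : R).

Definition idsub I J := forall x, I x -> J x.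

Lemma ideal0 I : is_ideal I -> I 0. Proof. by case. Qed.

Lemma idealD I a b : is_ideal I -> I a -> I b -> I (a + b).
Proof. by case=> _ + _; apply. Qed.

Lemma idealMl I r a : is_ideal I -> I a -> I (r * a).
Proof. by case=> _ _; apply. Qed.

Lemma idealMr I r a : is_ideal I -> I a -> I (a * r).
Proof. by rewrite mulrC; apply: idealMl. Qed.

Lemma idealN I a : is_ideal I -> I a -> I (- a).
Proof. by rewrite -mulN1r; apply: idealMl. Qed.

Lemma idealB I a b : is_ideal I -> I a -> I b -> I (a - b).
Proof. by move=> hI ha hb; apply: idealD (idealN hI hb). Qed.

Lemma idealBr I a b : is_ideal I -> I (a - b) -> I b -> I a.
Proof. by move=> hI hab hb; rewrite -(subrK b a); apply: idealD. Qed.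

Lemma ideal_sum I (T : Type) (r : seq T) (P : pred T) (F : T -> R) :
  is_ideal I -> (forall i, P i -> I (F i)) -> I (\sum_(i <- r | P i) F i).
Proof.
by move=> hI hF; apply: big_ind => //; [exact: ideal0 | move=> x y; exact: idealD].
Qed.

Lemma ideal_lincomb I n (c x : 'I_n -> R) :
  is_ideal I -> (forall i, I (x i)) -> I (\sum_i c i * x i).
Proof. by move=> hI hx; apply: ideal_sum => // i _; apply: idealMl. Qed.

Lemma ideq_ideal I J : ideq I J -> is_ideal J -> is_ideal I.
Proof.
move=> eIJ [J0 JD JM]; split; first exact/eIJ.
- by move=> a b /eIJ ha /eIJ hb; apply/eIJ/JD.
- by move=> r a /eIJ ha; apply/eIJ/JM.
Qed.

Lemma total_ideal : is_ideal (fun _ : R => True). Proof. by []. Qed.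

Lemma span_ideal S : is_ideal (span S).
Proof.
split.
- by exists 0%N, (fun _ => 0), (fun _ => 0); split; [case | rewrite big_ord0].
- move=> _ _ [n [a [s [hs ->]]]] [n' [a' [s' [hs' ->]]]].
  pose cat (u : 'I_n -> R) (u' : 'I_n' -> R) i :=
    match split i with inl j => u j | inr j => u' j end.
  exists (n + n')%N, (cat a a'), (cat s s').
  split; first by move=> i; rewrite /cat; case: split.
  rewrite big_split_ord /cat; congr (_ + _); apply: eq_bigr => i _.
  - by rewrite (unsplitK (inl i)).
  - by rewrite (unsplitK (inr i)).
- move=> r _ [n [a [s [hs ->]]]]; exists n, (fun i => r * a i), s; split=> //.
  by rewrite mulr_sumr; apply: eq_bigr => i _; rewrite mulrA.
Qed.

Lemma span_in S x : S x -> span S x.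
Proof. by exists 1%N, (fun _ => 1), (fun _ => x); rewrite big_ord1 mul1r. Qed.

Lemma span_min S I : is_ideal I -> (forall x, S x -> I x) -> idsub (span S) I.
Proof. by move=> hI hS _ [n [a [s [hs ->]]]]; apply: ideal_lincomb => // i; apply: hS. Qed.

Lemma gen_fam_ideal n (f : 'I_n -> R) : is_ideal (gen_fam f).
Proof.
split.
- by exists (fun _ => 0); rewrite big1 // => i _; rewrite mul0r.
- move=> _ _ [c ->] [c' ->]; exists (fun i => c i + c' i); rewrite -big_split.
  by apply: eq_bigr => i _; rewrite mulrDl.
- move=> r _ [c ->]; exists (fun i => r * c i); rewrite mulr_sumr.
  by apply: eq_bigr => i _; rewrite mulrA.
Qed.

Lemma sum_delta n (f : 'I_n -> R) i : \sum_j (j == i)%:R * f j = f i.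
Proof.
rewrite (bigD1 i) //= eqxx mul1r big1 ?addr0 // => j /negbTE ->.
by rewrite mul0r.
Qed.

Lemma gen_fam_in n (f : 'I_n -> R) i : gen_fam f (f i).
Proof. by exists (fun j => (j == i)%:R); rewrite sum_delta. Qed.

Lemma gen_fam_min n (f : 'I_n -> R) I :
  is_ideal I -> (forall i, I (f i)) -> idsub (gen_fam f) I.
Proof. by move=> hI hf _ [c ->]; apply: ideal_lincomb. Qed.

Lemma idsum_ideal I J : is_ideal I -> is_ideal J -> is_ideal (idsum I J).
Proof.
move=> hI hJ; split.
- by exists 0, 0; rewrite addr0; split; [apply: ideal0 | split => //; apply: ideal0].
- move=> _ _ [a [b [ha [hb ->]]]] [a' [b' [ha' [hb' ->]]]].
  exists (a + a'), (b + b'); rewrite addrACA.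
  by split; [|split]; rewrite //; apply: idealD.
- move=> r _ [a [b [ha [hb ->]]]]; exists (r * a), (r * b).
  by rewrite mulrDr; split; [|split]; rewrite //; apply: idealMl.
Qed.

Lemma idsum_l I J x : is_ideal J -> I x -> idsum I J x.
Proof. by move=> hJ Ix; exists x, 0; rewrite addr0; do 2!split=> //; apply: ideal0. Qed.

Lemma idsum_r I J x : is_ideal I -> J x -> idsum I J x.
Proof. by move=> hI Jx; exists 0, x; rewrite add0r; split=> //; apply: ideal0. Qed.

Lemma idsubDr I J J' : idsub J J' -> idsub (idsum I J) (idsum I J').
Proof. by move=> sJ _ [a [b [ha [hb ->]]]]; exists a, b; do 2!split=> //; apply: sJ. Qed.

Lemma idmul_ideal I J : is_ideal (idmul I J). Proof. exact: span_ideal. Qed.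

Lemma idmul_in I J a b : I a -> J b -> idmul I J (a * b).
Proof. by move=> ha hb; apply: span_in; exists a, b. Qed.

Lemma idmul_sub I I' J J' : idsub I I' -> idsub J J' -> idsub (idmul I J) (idmul I' J').
Proof.
move=> sI sJ; apply: span_min; first exact: idmul_ideal.
by move=> _ [a [b [ha [hb ->]]]]; apply: idmul_in; [apply: sI | apply: sJ].
Qed.

Lemma idmul_subr I J : is_ideal J -> idsub (idmul I J) J.
Proof. by move=> hJ; apply: span_min => // _ [a [b [_ [hb ->]]]]; apply: idealMl. Qed.

Lemma idpow_ideal I n : is_ideal (idpow I n).
Proof. by case: n => [|n]; [exact: total_ideal | exact: idmul_ideal]. Qed.

Lemma idpowS_in I n a b : idpow I n a -> I b -> idpow I n.+1 (a * b).
Proof. exact: idmul_in. Qed.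

Lemma idpow1 I x : is_ideal I -> idpow I 1 x <-> I x.
Proof.
by move=> hI; split=> [|Ix]; [apply: idmul_subr | rewrite -(mul1r x); apply: idpowS_in].
Qed.

Lemma idpow_mul I p q a b : is_ideal I ->
  idpow I p a -> idpow I q b -> idpow I (p + q) (a * b).
Proof.
move=> hI; elim: q b => [|q IH] b ha /=.
  by rewrite addn0 => _; apply: idealMr => //; apply: idpow_ideal.
move=> [n [c [s [hs ->]]]]; rewrite addnS mulr_sumr.
apply: ideal_sum => [|i _]; first exact: idpow_ideal.
have [u [v [hu [hv ->]]]] := hs i; rewrite mulrCA [a * _]mulrA.
by apply: idealMl; [exact: idpow_ideal | apply: idpowS_in => //; apply: IH].
Qed.

Lemma idpowS_sub I n : idsub (idpow I n.+1) (idpow I n).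
Proof.
apply: span_min; first exact: idpow_ideal.
by move=> _ [a [b [ha [_ ->]]]]; apply: idealMr => //; apply: idpow_ideal.
Qed.

Lemma idpow_le I n t : (n <= t)%N -> idsub (idpow I t) (idpow I n).
Proof.
move/subnK <-; elim: (t - n)%N => // k IH x.
by rewrite addSn => /idpowS_sub; apply: IH.
Qed.

Lemma idpow_subl I I' n : idsub I I' -> idsub (idpow I n) (idpow I' n).
Proof. by move=> sI; elim: n => //= n IH; apply: idmul_sub. Qed.

Lemma perturbation_exists I J P k (f : 'I_k -> R) : is_ideal P ->
  (forall i, I (f i)) -> idsub (idsum I P) (idsum J P) ->
  exists eps : 'I_k -> R, (forall i, P (eps i)) /\ (forall i, J (f i + eps i)).
Proof.
move=> hP If sIJ.
have [eps heps] : exists eps : 'I_k -> R, forall i, P (eps i) /\ J (f i + eps i).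
  apply: (@fin_all_exists _ (fun=> R) (fun i e => P e /\ J (f i + e))) => i.
  have [j [e [Jj [Pe E]]]] := sIJ _ (idsum_l hP (If i)).
  by exists (- e); rewrite E addrK; split=> //; apply: idealN.
by exists eps; split=> i; case: (heps i).
Qed.

End Ideals.

Section LocalRing.
Variables (R : comUnitRingType) (m : R -> Prop).
Hypothesis hloc : local_max m.
Implicit Types (I J K L : R -> Prop) (x y a b c : R).

Lemma local_max_ideal : is_ideal m. Proof. by case: hloc. Qed.

Lemma unit_notin_max c : ~ m c -> c \is a GRing.unit.
Proof. by case: hloc => _ mE /mE /negP; rewrite negbK. Qed.

Lemma notin_max1 : ~ m 1.
Proof. by case: hloc => _ /[apply]; rewrite unitr1. Qed.

Lemma unit_1subr c : m c -> (1 - c) \is a GRing.unit.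
Proof.
move=> mc; apply: unit_notin_max => m1c; apply: notin_max1.
by rewrite -(subrK c 1); apply: idealD local_max_ideal _ _.
Qed.

Definition mcomb n (l : 'I_n -> R) z :=
  exists2 c : 'I_n -> R, (forall i, m (c i)) & z = \sum_i c i * l i.

Lemma mcomb_ideal n (l : 'I_n -> R) : is_ideal (mcomb l).
Proof.
have hm := local_max_ideal; split.
- exists (fun _ => 0) => [i|]; first exact: ideal0.
  by rewrite big1 // => i _; rewrite mul0r.
- move=> _ _ [c hc ->] [c' hc' ->]; exists (fun i => c i + c' i) => [i|].
    exact: idealD.
  by rewrite -big_split; apply: eq_bigr => i _; rewrite mulrDl.
- move=> r _ [c hc ->]; exists (fun i => r * c i) => [i|]; first exact: idealMl.
  by rewrite mulr_sumr; apply: eq_bigr => i _; rewrite mulrA.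
Qed.

Lemma idmul_max_gen_fam_sub L n (l : 'I_n -> R) :
  idsub L (gen_fam l) -> idsub (idmul m L) (mcomb l).
Proof.
move=> sL; apply: span_min; first exact: mcomb_ideal.
move=> _ [a [b [ma [/sL [d ->] ->]]]]; exists (fun i => a * d i).
  by move=> i; apply: idealMr local_max_ideal _.
by rewrite mulr_sumr; apply: eq_bigr => i _; rewrite mulrA.
Qed.

Lemma idmul_max_sub_idsum_mcomb K L n (l : 'I_n -> R) : is_ideal K ->
  idsub L (idsum K (gen_fam l)) -> idsub (idmul m L) (idsum K (mcomb l)).
Proof.
move=> hK sL; apply: span_min; first by apply: idsum_ideal; [|exact: mcomb_ideal].
move=> _ [a [b [ma [/sL [k [_ [hk [[d ->] ->]]]] ->]]]].
exists (a * k), (\sum_i a * d i * l i); split; first exact: idealMl.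
split; first by exists (fun i => a * d i) => // i; apply: idealMr local_max_ideal _.
by rewrite mulrDr mulr_sumr; congr (_ + _); apply: eq_bigr => i _; rewrite mulrA.
Qed.

Lemma nakayama K L n (l : 'I_n -> R) : is_ideal K -> ideq L (gen_fam l) ->
  idsub L (idsum K (idmul m L)) -> idsub L K.
Proof.
move=> hK eL sL; have hL : is_ideal L := ideq_ideal eL (gen_fam_ideal l).
have hKg n' (l' : 'I_n' -> R) : is_ideal (idsum K (gen_fam l')).
  exact: idsum_ideal (gen_fam_ideal _).
have Ll i : L (l i) by apply/eL/gen_fam_in.
have sLl : idsub L (idsum K (gen_fam l)) by move=> y /eL; apply: idsum_r.
elim: n l {eL} Ll sLl => [|n IH] l Ll sLl.
  by move=> y /sLl [k [_ [hk [[c ->] ->]]]]; rewrite big_ord0 addr0.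
pose l' j := l (lift ord0 j).
(* l_0 = k + \sum_i c_i l_i with k in K and c_i in m, and 1 - c_0 is a unit *)
have l0_in : idsum K (gen_fam l') (l ord0).
  have [k1 [w [hk1 [hw E]]]] := sL _ (Ll ord0).
  have [k2 [_ [hk2 [[c mc ->] Ew]]]] := idmul_max_sub_idsum_mcomb hK sLl hw.
  rewrite big_ord_recl in Ew.
  have E1 : (1 - c ord0) * l ord0 =
      (k1 + k2) + \sum_(j < n) c (lift ord0 j) * l (lift ord0 j).
    by rewrite mulrBl mul1r {1}E Ew; ring.
  rewrite -(mulKr (unit_1subr (mc ord0)) (l ord0)) E1.
  apply: idealMl (hKg _ _) _; apply: idealD (hKg _ _) _ _.
    by apply: idsum_l (gen_fam_ideal _) _; apply: idealD.
  by apply: idsum_r => //; exists (fun j => c (lift ord0 j)).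
apply: (IH l') => [j | y /sLl [k [g [hk [hg ->]]]]]; first exact: Ll.
apply: idealD (hKg _ _) (idsum_l (gen_fam_ideal _) hk) _.
apply: gen_fam_min (hKg _ _) _ _ hg => i.
by case: (unliftP ord0 i) => [j ->|->] //; apply: idsum_r (gen_fam_in l' j).
Qed.

End LocalRing.

Section Noetherian.
Variable R : comUnitRingType.
Hypothesis noeth : noetherian R.
Implicit Types (K Q : R -> Prop) (x a : R).

Lemma chain_sub (C : nat -> R -> Prop) : (forall t, idsub (C t) (C t.+1)) ->
  forall t t', (t <= t')%N -> idsub (C t) (C t').
Proof.
move=> sC t t' /subnK <-; elim: (t' - t)%N => // k IH x /IH.
by rewrite addSn; apply: sC.
Qed.

Lemma noetherian_chain_stationary (C : nat -> R -> Prop) :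
  (forall t, is_ideal (C t)) -> (forall t, idsub (C t) (C t.+1)) ->
  exists j, forall t, idsub (C t) (C j).
Proof.
move=> hC sC; pose U x := exists t, C t x.
have hU : is_ideal U.
  split; first by exists 0%N; apply: ideal0.
  - move=> a b [t Ca] [t' Cb]; exists (maxn t t').
    apply: idealD => //; first exact: chain_sub (leq_maxl t t') _ Ca.
    exact: chain_sub (leq_maxr t t') _ Cb.
  - by move=> r a [t Ca]; exists t; apply: idealMl.
have [p [u eU]] := noeth hU.
have [T CTu] : exists T : 'I_p -> nat, forall i, C (T i) (u i).
  apply: (@fin_all_exists _ (fun=> nat) (fun i t => C t (u i))) => i.
  by apply/eU/gen_fam_in.
exists (\max_i T i) => t x Cx; have /eU : U x by exists t.
apply: gen_fam_min => // i; exact: chain_sub (leq_bigmax i) _ (CTu i).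
Qed.

Lemma noetherian_maximal (F : (R -> Prop) -> Prop) Q0 :
  (forall Q, F Q -> is_ideal Q) -> F Q0 ->
  exists Q, F Q /\ forall Q', F Q' -> idsub Q Q' -> idsub Q' Q.
Proof.
move=> hF FQ0; apply: NNPP => nomax.
have grow (Q : {Q | F Q}) : {Q' : {Q | F Q} |
    idsub (sval Q) (sval Q') /\ exists x, sval Q' x /\ ~ sval Q x}.
  apply: constructive_indefinite_description; case: Q => Q FQ /=.
  apply: NNPP => nobig; apply: nomax; exists Q; split=> // Q' FQ' sQ x Q'x.
  by apply: NNPP => Qx; apply: nobig; exists (exist _ Q' FQ'); split=> //; exists x.
pose fix chain t := if t is t'.+1 then sval (grow (chain t')) else exist F Q0 FQ0.
have sC t : idsub (sval (chain t)) (sval (chain t.+1)).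
  by rewrite /=; case: (grow (chain t)) => ? [].
have [j sCj] := noetherian_chain_stationary (fun t => hF _ (svalP (chain t))) sC.
have /= := sCj j.+1; case: (grow (chain j)) => /= Q' [_ [x [Q'x Qx]]].
by move/(_ x Q'x).
Qed.

Lemma maximal_avoiding_pow Q x a : is_ideal Q -> ~ Q x ->
  (forall Q', is_ideal Q' -> idsub Q Q' -> ~ Q' x -> idsub Q' Q) ->
  Q (a * x) -> exists j, Q (a ^+ j).
Proof.
move=> hQ Qx Qmax Qax; pose C t y := Q (a ^+ t * y).
have hC t : is_ideal (C t).
  split; rewrite /C; first by rewrite mulr0; apply: ideal0.
  - by move=> u v Cu Cv; rewrite mulrDr; apply: idealD.
  - by move=> r u Cu; rewrite mulrCA; apply: idealMl.
have sC t : idsub (C t) (C t.+1) by move=> y; rewrite /C exprS -mulrA; apply: idealMl.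
have [j sCj] := noetherian_chain_stationary hC sC.
exists j; pose Q' := idsum Q (gen_fam (fun _ : 'I_1 => a ^+ j)).
have hQ' : is_ideal Q' := idsum_ideal hQ (gen_fam_ideal _).
apply: (Qmax Q' hQ' (fun y => idsum_l (gen_fam_ideal _))); last first.
  by apply: idsum_r hQ (gen_fam_in _ ord0).
move=> [q [_ [hq [[c ->] Ex]]]]; apply: Qx; rewrite big_ord1 in Ex.
(* x = q + c a^j, and a^2j c = a^j x - a^j q is in Q, so c is in C (2j) = C j *)
have Cx : C j x by apply: (sCj 1%N); rewrite /C expr1.
have Cc : C (j + j) (c ord0).
  rewrite /C; have -> : a ^+ (j + j) * c ord0 = a ^+ j * x - a ^+ j * q.
    by rewrite Ex exprD; ring.
  by apply: idealB => //; apply: idealMl.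
by rewrite Ex; apply: idealD => //; rewrite mulrC; apply: sCj Cc.
Qed.

End Noetherian.

Section PowersInIdeal.
Variables (R : comUnitRingType) (k n : nat) (a : 'I_k -> R) (Q : R -> Prop).
Hypotheses (hQ : is_ideal Q) (Qa : forall i, Q (a i ^+ n)).

(* After expanding the product, each monomial has more than k * n factors
   among the k generators, so one of them occurs at least n times. *)
Lemma prod_gen_fam_in M (z : 'I_M -> R) :
  (k * n < M)%N -> (forall j, gen_fam a (z j)) -> Q (\prod_j z j).
Proof.
move=> ltM hz.
have [C hC] := @fin_all_exists _ (fun=> 'I_k -> R)
  (fun j c => z j = \sum_i c i * a i) hz.
rewrite (eq_bigr _ (fun j _ => hC j)) bigA_distr_bigA; apply: ideal_sum => // phi _.
rewrite big_split; apply: idealMl => //=.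
have fibers : (\sum_i #|[pred j | phi j == i]| = M)%N.
  rewrite -[RHS]card_ord -sum1_card (partition_big phi predT) //.
  by apply: eq_bigr => i _; rewrite -sum1_card; apply: eq_bigl => j; rewrite inE.
have [i hi] : exists i, (n <= #|[pred j | phi j == i]|)%N.
  case: (pickP (fun i => n <= #|[pred j | phi j == i]|)%N) => [i hi | small].
    by exists i.
  suff : (M <= k * n)%N by rewrite leqNgt ltM.
  rewrite -fibers -[k in (_ <= k * _)%N]card_ord -sum_nat_const; apply: leq_sum => i _.
  by rewrite ltnW // ltnNge small.
rewrite (bigID (fun j => phi j == i)) /=; apply: idealMr => //.
rewrite (eq_big (mem [pred j | phi j == i]) (fun=> a i)) => [|//|j /eqP -> //].
by rewrite prodr_const -(subnKC hi) exprD; apply: idealMr.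
Qed.

Lemma mul_idpow_gen_fam_in t u M (z : 'I_M -> R) :
  idpow (gen_fam a) t u -> (forall j, gen_fam a (z j)) ->
  (k * n < t + M)%N -> Q (u * \prod_j z j).
Proof.
elim: t u M z => [|t IH] u M z hu hz ltM.
  by apply: idealMl => //; apply: prod_gen_fam_in.
case: hu => [l [c [s [hs ->]]]]; rewrite mulr_suml; apply: ideal_sum => // i _.
have [p [v [hp [hv ->]]]] := hs i.
pose z' j := if unlift ord0 j is Some j' then z j' else v.
have -> : c i * (p * v) * \prod_j z j = c i * (p * \prod_j z' j).
  rewrite big_ord_recl /z' unlift_none -!mulrA; congr (_ * (_ * (_ * _))).
  by apply: eq_bigr => j _; rewrite liftK.
apply: idealMl => //; apply: IH => // [j|]; last by rewrite addnS -addSn.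
by rewrite /z'; case: (unlift ord0 j).
Qed.

Lemma idpow_gen_fam_sub : idsub (idpow (gen_fam a) (k * n).+1) Q.
Proof.
move=> u hu; have := @mul_idpow_gen_fam_in _ u 0 (fun=> 1) hu.
by rewrite big_ord0 mulr1; apply; [case | rewrite addn0].
Qed.

End PowersInIdeal.

Section Krull.
Variables (R : comUnitRingType) (m : R -> Prop).
Hypotheses (noeth : noetherian R) (hloc : local_max m).

Lemma idpow_max_sub Q : is_ideal Q -> (forall a, m a -> exists j, Q (a ^+ j)) ->
  exists t, idsub (idpow m t) Q.
Proof.
move=> hQ Qpow; have [k [a em]] := noeth (local_max_ideal hloc).
have [T QaT] := @fin_all_exists _ (fun=> nat) (fun i j => Q (a i ^+ j))
  (fun i => Qpow _ ((em _).2 (gen_fam_in a i))).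
pose n := \max_i T i.
have Qa i : Q (a i ^+ n) by rewrite /n -(subnKC (leq_bigmax i)) exprD; apply: idealMr.
exists (k * n).+1 => x /(idpow_subl (fun y => (em y).1)).
exact: idpow_gen_fam_sub.
Qed.

(* If y lies in the intersection L but not in K + mL, take Q maximal among the
   ideals containing K + mL and avoiding y; as m y lies in Q, Q contains a power
   of every element of m, hence a power of m, hence y. So L = K + mL, and
   Nakayama gives L = K. *)
Lemma krull_intersection K x : is_ideal K ->
  (forall n, idsum K (idpow m n) x) -> K x.
Proof.
move=> hK; pose L y := forall n, idsum K (idpow m n) y.
have hKm n : is_ideal (idsum K (idpow m n)) := idsum_ideal hK (idpow_ideal m n).
have hL : is_ideal L.
  split=> [n | a b La Lb n | r a La n].
  - exact: ideal0.
  - exact: idealD.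
  - exact: idealMl.
have [p [l eL]] := noeth hL.
suff sL : idsub L (idsum K (idmul m L)) by apply: (nakayama hloc hK eL sL).
move=> y Ly; apply: NNPP => nLy; pose Q0 := idsum K (idmul m L).
have hQ0 : is_ideal Q0 := idsum_ideal hK (idmul_ideal m L).
pose F Q := [/\ is_ideal Q, idsub Q0 Q & ~ Q y].
have [Q [[hQ sQ0 Qy] Qmax]] :=
  noetherian_maximal noeth (fun Q (FQ : F Q) => let: And3 hQ _ _ := FQ in hQ)
    (And3 hQ0 (fun _ => id) nLy).
have [t sQ] : exists t, idsub (idpow m t) Q.
  apply: idpow_max_sub => // a ma; apply: (maximal_avoiding_pow noeth hQ Qy).
    by move=> Q' hQ' sQ Q'y; apply: Qmax => //; split=> // z /sQ0 /sQ.
  by apply/sQ0/idsum_r => //; apply: idmul_in.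
apply: Qy; have [u [v [hu [hv ->]]]] := Ly t.
by apply: (idealD hQ); [apply/sQ0/(idsum_l (idmul_ideal _ _) hu) | apply: sQ].
Qed.

End Krull.

Section LinearAlgebraModB.
Variables (R : comUnitRingType) (m : R -> Prop).
Hypothesis hloc : local_max m.
Implicit Types (A B : R -> Prop) (w y : R).

Definition spans_mod B n (x : 'I_n -> R) y :=
  exists c : 'I_n -> R, B (y - \sum_i c i * x i).

Definition indep_mod B n (x : 'I_n -> R) :=
  forall c : 'I_n -> R, B (\sum_i c i * x i) -> forall i, m (c i).

(* [hilbert_fun m I n d] unfolds to
   [exists x : 'I_d -> R, basis_mod (idsum (idpow m n) I) (idsum (idpow m n.+1) I) x]. *)
Definition basis_mod A B n (x : 'I_n -> R) :=
  [/\ forall i, A (x i), forall y, A y -> spans_mod B x y & indep_mod B x].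

Lemma exchange_spans_mod B n (x c : 'I_n.+1 -> R) i0 w y : is_ideal B ->
  B (w - \sum_i c i * x i) -> ~ m (c i0) -> spans_mod B x y ->
  exists mu, spans_mod B (fun j => x (lift i0 j)) (y - mu * w).
Proof.
move=> hB Bw ci0 [e Be]; have /mulVr ci0K := unit_notin_max hloc ci0.
set v := (c i0)^-1 in ci0K; exists (e i0 * v).
exists (fun j => e (lift i0 j) - e i0 * v * c (lift i0 j)).
rewrite (bigD1_ord i0) //= in Bw; rewrite (bigD1_ord i0) //= in Be.
set Se := \sum_(j < n) _ in Be; set Sc := \sum_(j < n) _ in Bw.
have -> : \sum_j (e (lift i0 j) - e i0 * v * c (lift i0 j)) * x (lift i0 j) =
    Se - e i0 * v * Sc.
  by rewrite mulr_sumr -sumrB; apply: eq_bigr => j _; ring.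
have -> : y - e i0 * v * w - (Se - e i0 * v * Sc) =
    (y - (e i0 * x i0 + Se)) - e i0 * v * (w - (c i0 * x i0 + Sc)).
  have k1 : e i0 * v * (c i0 * x i0) = e i0 * x i0.
    by rewrite mulrA -(mulrA (e i0)) ci0K mulr1.
  by rewrite [in RHS]mulrBr [in RHS]mulrDr k1; ring.
by apply: idealB => //; apply: idealMl.
Qed.

Lemma drop_spans_mod B n (x c : 'I_n.+1 -> R) i0 y : is_ideal B ->
  B (\sum_i c i * x i) -> ~ m (c i0) -> spans_mod B x y ->
  spans_mod B (fun j => x (lift i0 j)) y.
Proof.
move=> hB Bc ci0 sy.
have Bc' : B (0 - \sum_i c i * x i) by rewrite sub0r; apply: idealN.
by have [mu] := exchange_spans_mod hB Bc' ci0 sy; rewrite mulr0 subr0.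
Qed.

Lemma indep_mod_card_le A B e (x : 'I_e -> R) d (y : 'I_d -> R) : is_ideal B ->
  (forall c z, m c -> A z -> B (c * z)) -> (forall t, A (x t)) ->
  (forall i, spans_mod B x (y i)) -> indep_mod B y -> (d <= e)%N.
Proof.
(* The relation for y_0 has a unit coefficient at some x_t0: exchanging x_t0
   for y_0 and subtracting multiples of y_0 from the other y_i removes one
   element from each family. *)
move=> hB mAB; elim: d e x y => [//|d IH] e x y Ax sy iy.
have [C BC] := sy ord0.
have [t0 Ct0] : exists t0, ~ m (C t0).
  apply: NNPP => allm; apply: (notin_max1 hloc).
  have By0 : B (y ord0).
    apply: (idealBr hB BC); apply: ideal_sum => // t _; apply: mAB (Ax t).
    by apply: NNPP => Ct; apply: allm; exists t.
  by have := iy (fun i => (i == ord0)%:R); rewrite sum_delta => /(_ By0 ord0); rewrite eqxx.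
case: e x Ax sy C BC t0 Ct0 => [|e] x Ax sy C BC t0 Ct0; first by case: t0 Ct0.
pose x' j := x (lift t0 j).
have [mu smu] := @fin_all_exists _ (fun=> R)
  (fun i mu => spans_mod B x' (y (lift ord0 i) - mu * y ord0))
  (fun i => exchange_spans_mod hB BC Ct0 (sy (lift ord0 i))).
apply: (IH e x' (fun i => y (lift ord0 i) - mu i * y ord0)) => // [t | c Bc i].
  exact: Ax.
pose ct j := if unlift ord0 j is Some i then c i else - \sum_i c i * mu i.
have := iy ct _ (lift ord0 i); rewrite /ct liftK; apply.
rewrite big_ord_recl unlift_none [X in _ + X](eq_bigr (fun i => c i * y (lift ord0 i))).
  rewrite addrC mulNr mulr_suml -sumrB; congr B: Bc; apply: eq_bigr => j _; ring.
by move=> j _; rewrite liftK.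
Qed.

Lemma basis_mod_exists A B : is_ideal B ->
  (exists p (a : 'I_p -> R), ideq A (gen_fam a)) ->
  exists d (x : 'I_d -> R), basis_mod A B x.
Proof.
move=> hB [p [a eA]].
pose P d := exists x : 'I_d -> R,
  (forall i, A (x i)) /\ (forall y, A y -> spans_mod B x y).
have Pp : P p.
  exists a; split=> [i | y /eA [c ->]]; first exact/eA/gen_fam_in.
  by exists c; rewrite subrr; apply: ideal0.
have [d [[x [Ax sx]] dmin]] := ex_minimal Pp.
exists d, x; split=> // c Bc i; apply: NNPP => ci.
case: d x Ax sx dmin c Bc i ci => [|d] x Ax sx dmin c Bc i ci; first by case: i ci.
have : P d.
  exists (fun j => x (lift i j)); split=> [j | y /sx]; first exact: Ax.
  exact: drop_spans_mod Bc ci.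
by move/dmin; rewrite ltnn.
Qed.

Lemma spanning_indep_mod A B d (x y : 'I_d -> R) : is_ideal B ->
  (forall c z, m c -> A z -> B (c * z)) ->
  (forall i, A (x i)) -> (forall z, A z -> spans_mod B x z) ->
  (forall i, A (y i)) -> indep_mod B y -> indep_mod B x.
Proof.
move=> hB mAB Ax sx Ay iy c Bc i; apply: NNPP => ci.
case: d x y Ax sx Ay iy c Bc i ci => [|d] x y Ax sx Ay iy c Bc i ci.
  by case: i ci.
have sy j : spans_mod B (fun j => x (lift i j)) (y j).
  exact: drop_spans_mod hB Bc ci (sx _ (Ay j)).
by have := indep_mod_card_le hB mAB (fun j => Ax _) sy iy; rewrite ltnn.
Qed.

End LinearAlgebraModB.

Section MinimalGenerators.
Variables (R : comUnitRingType) (m : R -> Prop).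
Hypotheses (noeth : noetherian R) (hloc : local_max m).
Implicit Types (I J : R -> Prop).

Lemma min_num_gens_exists I : is_ideal I ->
  exists k (f : 'I_k -> R), ideq I (gen_fam f) /\ min_num_gens I k.
Proof.
move=> /noeth [p [f0 ef0]].
have [k [[f ef] kmin]] := ex_minimal (P := fun k => exists f : 'I_k -> R,
  ideq I (gen_fam f)) (ex_intro _ f0 ef0).
by exists k, f; split=> //; split=> [|l g eg]; [exists f | apply: kmin; exists g].
Qed.

Lemma min_num_gens_indep_mod I k (f : 'I_k -> R) : is_ideal I ->
  ideq I (gen_fam f) -> min_num_gens I k -> indep_mod m (idmul m I) f.
Proof.
move=> hI ef [_ kmin] c Bc i; apply: NNPP => ci.
case: k f ef kmin c Bc i ci => [|k] f ef kmin c Bc i ci; first by case: i ci.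
pose K := gen_fam (fun j => f (lift i j)).
have sIK : idsub I (idsum K (idmul m I)).
  move=> z /[dup] Iz /ef [e Ez]; have hmI := idmul_ideal m I.
  have [|e' Be'] := drop_spans_mod hloc hmI Bc ci (y := z).
    by exists e; rewrite -Ez subrr; apply: ideal0.
  exists (\sum_j e' j * f (lift i j)), (z - \sum_j e' j * f (lift i j)).
  by split; [exists e' | split=> //; rewrite addrC subrK].
have eIK : ideq I K.
  move=> z; split; first by apply: (nakayama hloc _ ef sIK); apply: gen_fam_ideal.
  by apply: gen_fam_min hI _ z => j; apply/ef/gen_fam_in.
by have := kmin _ _ eIK; rewrite ltnn.
Qed.

Lemma indep_mod_min_num_gens J k (g : 'I_k -> R) : is_ideal J ->
  ideq J (gen_fam g) -> indep_mod m (idmul m J) g -> min_num_gens J k.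
Proof.
move=> hJ eg ig; split=> [|l h eh]; first by exists g.
apply: (indep_mod_card_le hloc (A := J) (idmul_ideal m J) _ _ _ ig).
- by move=> c z mc Jz; apply: idmul_in.
- by move=> j; apply/eh/gen_fam_in.
- move=> i; have /eh [e ->] : J (g i) by apply/eg/gen_fam_in.
  by exists e; rewrite subrr; apply: ideal0 (idmul_ideal _ _).
Qed.

End MinimalGenerators.

Section HilbertFunction.
Variables (R : comUnitRingType) (m : R -> Prop).
Hypotheses (noeth : noetherian R) (hloc : local_max m).
Implicit Types (I J : R -> Prop).

Lemma idsum_idpowS_mul I n c z : is_ideal I -> m c ->
  idsum (idpow m n) I z -> idsum (idpow m n.+1) I (c * z).
Proof.
move=> hI mc [p [q [mp [Iq ->]]]]; exists (c * p), (c * q).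
by rewrite mulrDr mulrC; split; [apply: idpowS_in | split=> //; apply: idealMl].
Qed.

Lemma hilbert_fun_exists I n : is_ideal I -> exists d, hilbert_fun m I n d.
Proof.
move=> hI; have hB := idsum_ideal (idpow_ideal m n.+1) hI.
have [d [x bx]] := basis_mod_exists hloc hB (noeth (idsum_ideal (idpow_ideal m n) hI)).
by exists d, x.
Qed.

Lemma hilbert_fun_basis_idpow I n d : is_ideal I -> hilbert_fun m I n d ->
  exists u : 'I_d -> R, (forall i, idpow m n (u i)) /\
    basis_mod m (idsum (idpow m n) I) (idsum (idpow m n.+1) I) u.
Proof.
move=> hI [x [Ax sx ix]].
have hB := idsum_ideal (idpow_ideal m n.+1) hI.
have [u xu] : exists u : 'I_d -> R, forall i, idpow m n (u i) /\ I (x i - u i).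
  apply: (@fin_all_exists _ (fun=> R) (fun i u => idpow m n u /\ I (x i - u))) => i.
  by have [p [q [mp [Iq ->]]]] := Ax i; exists p; rewrite addrAC subrr add0r.
have Ixu c : idsum (idpow m n.+1) I (\sum_i c i * (x i - u i)).
  by apply: idsum_r (idpow_ideal _ _) _; apply: ideal_lincomb hI _ => i; case: (xu i).
have sumB c : \sum_i c i * x i - \sum_i c i * u i = \sum_i c i * (x i - u i).
  by rewrite -sumrB; apply: eq_bigr => i _; rewrite mulrBr.
exists u; split=> [i|]; first by case: (xu i).
split=> [i | w Aw | c Bc].
- by apply: idsum_l hI _; case: (xu i).
- have [c Bc] := sx w Aw; exists c.
  have -> : w - \sum_i c i * u i =
      (w - \sum_i c i * x i) + \sum_i c i * (x i - u i) by rewrite -sumB; ring.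
  exact: idealD hB Bc (Ixu c).
- apply: ix; have -> : \sum_i c i * x i =
      \sum_i c i * u i + \sum_i c i * (x i - u i) by rewrite -sumB; ring.
  exact: idealD hB Bc (Ixu c).
Qed.

Lemma hilbert_fun_compare I J n : is_ideal I -> is_ideal J ->
  idsub (idcap (idpow m n) I) (idsum (idpow m n.+1) J) ->
  (forall d, hilbert_fun m I n d -> hilbert_fun m J n d) ->
  idsub (idcap (idpow m n) J) (idsum (idpow m n.+1) I).
Proof.
(* A basis u of (m^n + I)/(m^(n+1) + I) chosen in m^n still spans
   (m^n + J)/(m^(n+1) + J), which also has dimension d; so u is independent
   there too, and the coefficients on u of an element of J ∩ m^n lie in m. *)
move=> hI hJ sIJ HF z [mnz Jz].
have hmn := idpow_ideal m n.
set BI := idsum (idpow m n.+1) I; set BJ := idsum (idpow m n.+1) J.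
have hBI : is_ideal BI := idsum_ideal (idpow_ideal m n.+1) hI.
have hBJ : is_ideal BJ := idsum_ideal (idpow_ideal m n.+1) hJ.
have [d HId] := hilbert_fun_exists n hI.
have [u [mnu [_ su _]]] := hilbert_fun_basis_idpow hI HId.
have [y [Ay _ iy]] := HF d HId.
have sBIJ w : idpow m n w -> BI w -> BJ w.
  move=> mnw [v [i [mv [Ii Ew]]]].
  have Ei : i = w - v by rewrite Ew addrC addKr.
  have mni : idpow m n i by rewrite Ei; apply: idealB hmn mnw (idpowS_sub mv).
  have [v' [j [mv' [Jj Ei']]]] := sIJ i (conj mni Ii).
  exists (v + v'), j; rewrite Ew Ei' addrA.
  by split; [apply: idealD (idpow_ideal _ _) mv mv' | split].
have suJ w : idsum (idpow m n) J w -> spans_mod BJ u w.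
  move=> [p [j [mp [Jj ->]]]]; have [c Bc] := su p (idsum_l hI mp).
  exists c; have -> : p + j - \sum_i c i * u i = (p - \sum_i c i * u i) + j by ring.
  apply: idealD hBJ (sBIJ _ _ Bc) (idsum_r (idpow_ideal _ _) Jj).
  exact: idealB hmn mp (ideal_lincomb c hmn mnu).
have iuJ : indep_mod m BJ u.
  apply: (spanning_indep_mod hloc hBJ _ _ suJ Ay iy) => [c w mc Aw | i].
    exact: idsum_idpowS_mul.
  exact: idsum_l hJ (mnu i).
have [c Bc] := su z (idsum_l hI mnz).
have mnc := ideal_lincomb c hmn mnu.
have /iuJ mc : BJ (\sum_i c i * u i).
  have -> : \sum_i c i * u i = z - (z - \sum_i c i * u i) by ring.
  exact: idealB hBJ (idsum_r (idpow_ideal _ _) Jz) (sBIJ _ (idealB hmn mnz mnc) Bc).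
rewrite -(subrK (\sum_i c i * u i) z); apply: idealD hBI Bc (idsum_l hI _).
apply: ideal_sum (idpow_ideal _ _) _ => i _.
by rewrite mulrC; apply: idpowS_in (mnu i) (mc i).
Qed.

End HilbertFunction.

Lemma AR_cap_sub (R : comUnitRingType) (m I : R -> Prop) s N n :
  AR_prop m I s -> (s < N)%N ->
  idsub (idcap (idpow m n) I) (idmul (idpow m (n.+1 - N)) I).
Proof.
move=> hAR ltsN z [mnz Iz]; case: (ltnP n N) => [ltnN | leNn].
  by rewrite (eqP (ltnN : (n.+1 - N == 0)%N)) -(mul1r z); apply: idmul_in.
have lesn : (s <= n)%N := leq_trans (ltnW ltsN) leNn.
move: ((hAR n lesn z).1 (conj mnz Iz)); apply: idmul_sub => [|y []//].
by apply: idpow_le; lia.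
Qed.

Section Perturbation.
Variables (R : comUnitRingType) (m I J : R -> Prop) (N s k : nat).
Variables (f eps : 'I_k -> R).
Hypotheses (noeth : noetherian R) (hloc : local_max m).
Hypotheses (hI : is_ideal I) (hJ : is_ideal J).
Hypotheses (hAR : AR_prop m I s) (ltsN : (s < N)%N).
Hypotheses (ef : ideq I (gen_fam f)) (mNeps : forall i, idpow m N (eps i)).
Hypothesis Jg : forall i, J (f i + eps i).
Hypothesis HF : forall n d, hilbert_fun m I n d -> hilbert_fun m J n d.

Local Notation g := (fun i => f i + eps i).

Lemma mul_idpow_perturb t p q : idpow m t p -> I q ->
  idsum (gen_fam g) (idpow m (t + N)) (p * q).
Proof.
move=> mtp /ef [b ->].
exists (\sum_i p * b i * g i), (- \sum_i p * b i * eps i); split.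
  by exists (fun i => p * b i).
split; last by rewrite mulr_sumr -sumrB; apply: eq_bigr => i _; ring.
apply: idealN (idpow_ideal _ _) _; apply: ideal_sum (idpow_ideal _ _) _ => i _.
by apply: idpow_mul => //; [exact: local_max_ideal | exact: idealMr (idpow_ideal _ _) _].
Qed.

Lemma capI_idpow_sub_perturb n :
  idsub (idcap (idpow m n) I) (idsum (gen_fam g) (idpow m n.+1)).
Proof.
move=> z /(AR_cap_sub hAR ltsN); apply: span_min.
  exact: idsum_ideal (gen_fam_ideal _) (idpow_ideal _ _).
move=> _ [p [q [mp [Iq ->]]]]; apply: idsubDr (mul_idpow_perturb mp Iq).
by apply: idpow_le; lia.
Qed.

Lemma capJ_idpow_sub_I n :
  idsub (idcap (idpow m n) J) (idsum (idpow m n.+1) I).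
Proof.
apply: (hilbert_fun_compare noeth hloc hI hJ _ (@HF n)).
move=> z /capI_idpow_sub_perturb.
move=> [a [b [ga [mb ->]]]]; exists b, a; rewrite addrC; split=> //; split=> //.
by apply: gen_fam_min hJ _ _ ga.
Qed.

Lemma J_sub_perturb_idpow n : idsub J (idsum (gen_fam g) (idpow m n)).
Proof.
have sgJ : idsub (gen_fam g) J by apply: gen_fam_min.
elim: n => [|n IH] z Jz; first by apply: idsum_r (gen_fam_ideal _) _.
have [a [b [ga [mnb Ez]]]] := IH z Jz.
have Jb : J b.
  have -> : b = z - a by rewrite Ez addrC addKr.
  exact: idealB hJ Jz (sgJ _ ga).
have [v [i [mv [Ii Eb]]]] := capJ_idpow_sub_I (conj mnb Jb).
have mni : idpow m n i.
  have -> : i = b - v by rewrite Eb addrC addKr.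
  exact: idealB (idpow_ideal _ _) mnb (idpowS_sub mv).
have [a' [v' [ga' [mv' Ei]]]] := capI_idpow_sub_perturb (conj mni Ii).
exists (a + a'), (v + v'); rewrite Ez Eb Ei addrCA addrA addrA.
split; first exact: idealD (gen_fam_ideal _) ga ga'.
by split; [apply: idealD (idpow_ideal _ _) mv mv' | ring].
Qed.

Lemma perturb_gen : ideq J (gen_fam g).
Proof.
move=> z; split=> [Jz | /(gen_fam_min hJ Jg)//].
apply: (krull_intersection noeth hloc (gen_fam_ideal _)) => n.
exact: J_sub_perturb_idpow.
Qed.

Lemma perturb_indep_mod : min_num_gens I k -> indep_mod m (idmul m J) g.
Proof.
move=> minI c Bc.
have sJg : idsub J (gen_fam g) by move=> z /perturb_gen.
have [d md Ed] := idmul_max_gen_fam_sub hloc sJg Bc.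
pose a i := c i - d i.
have Ea : \sum_i a i * f i = - \sum_i a i * eps i.
  apply/eqP; rewrite -subr_eq0 opprK.
  have -> : \sum_i a i * f i + \sum_i a i * eps i =
      \sum_i c i * g i - \sum_i d i * g i.
    by rewrite -!sumrB -big_split /=; apply: eq_bigr => i _; rewrite /a; ring.
  by rewrite Ed subrr.
have capNI : idcap (idpow m N) I (\sum_i a i * f i).
  split; last by apply/ef; exists a.
  rewrite Ea; apply: idealN (idpow_ideal _ _) _.
  exact: ideal_lincomb (idpow_ideal _ _) mNeps.
have /(min_num_gens_indep_mod hloc hI ef minI) ma : idmul m I (\sum_i a i * f i).
  move: capNI => /(AR_cap_sub hAR ltsN); rewrite subSnn.
  by apply: idmul_sub => // y /idpow1; apply; exact: local_max_ideal.
move=> i; rewrite -(subrK (d i) (c i)).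
exact: idealD (local_max_ideal hloc) (ma i) (md i).
Qed.

End Perturbation.

Theorem proposition3p5 (R : comUnitRingType) (m I J : R -> Prop) (N : nat) :
  noetherian R -> local_max m ->
  is_ideal I -> is_ideal J ->
  (exists s, AR_number m I s /\ (s < N)%N) ->
  ideq (idsum I (idpow m N)) (idsum J (idpow m N)) ->
  (forall n d, hilbert_fun m I n d <-> hilbert_fun m J n d) ->
  (exists k, min_num_gens I k /\ min_num_gens J k) /\
  (exists k (f eps : 'I_k -> R),
     [/\ min_num_gens I k, ideq I (gen_fam f),
         (forall i, idpow m N (eps i))
       & ideq J (gen_fam (fun i => f i + eps i))]).
Proof.
move=> noeth hloc hI hJ [s [[hAR _] ltsN]] eIJ HF.
have [k [f [ef minI]]] := min_num_gens_exists noeth hI.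
have [eps [mNeps Jg]] := perturbation_exists (idpow_ideal m N)
  (fun i => (ef (f i)).2 (gen_fam_in f i)) (fun z => (eIJ z).1).
have HF' n d := (HF n d).1.
have eJ := perturb_gen noeth hloc hI hJ hAR ltsN ef mNeps Jg HF'.
have iJ := perturb_indep_mod noeth hloc hI hJ hAR ltsN ef mNeps Jg HF' minI.
have minJ := indep_mod_min_num_gens hloc hJ eJ iJ.
by split; [exists k | exists k, f, eps].
Qed.
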